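(* Let $S$ be a dense subsemigroup of $((0,\infty),+)$, let $(X,\langle T_s\rangle_{s\in S})$ be a dynamical system, let $L$ be a minimal left ideal of $O^{+}(S)$, and let $x\in X$. The following statements are equivalent: (a) $x$ is a uniformly recurrent point near zero of $(X,\langle T_s\rangle_{s\in S})$; (b) there exists $u\in L$ such that $T_u(x)=x$; (c) there exist $y\in X$ and an idempotent $u\in L$ such that $T_u(y)=x$; (d) there exists an idempotent $u\in L$ such that $T_u(x)=x$.
   Context: ''Dense'' means dense in the usual topology of $(0,\infty)$. $\beta S$ is the Stone–Čech compactification of the discrete set $S$ (the space of ultrafilters on $S$, principal ultrafilters identified with points of $S$), with the operation $+$ extended so that $(\beta S,+)$ is a compact right topological semigroup: for $p,q\in\beta S$ and $A\subseteq S$, $A\in p+q$ iff $\{x\in S: -x+A\in q\}\in p$, where $-x+A=\{y\in S: x+y\in A\}$. Define $O^{+}(S)=\{p\in\beta S: S\cap(0,\epsilon)\in p \text{ for every } \epsilon>0\}$; it is a compact right topological subsemigroup of $\beta S$. A dynamical system $(X,\langle T_s\rangle_{s\in S})$ consists of a compact Hausdorff space $X$ and continuous maps $T_s:X\to X$ ($s\in S$) with $T_s\circ T_t=T_{s+t}$ for all $s,t\in S$. For $p\in\beta S$ and $x\in X$, $T_p(x)=p\text{-}\lim_{s\in S}T_s(x)$ (i.e. $T_p=\tilde\theta(p)$ where $\tilde\theta:\beta S\to X^X$ is the continuous extension of $s\mapsto T_s$); then $T_p\circ T_q=T_{p+q}$. A subset $B\subseteq S$ is syndetic near zero iff for every $\epsilon>0$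 there exist a finite nonempty $F\subseteq (0,\epsilon)\cap S$ and $\delta>0$ such that $S\cap(0,\delta)\subseteq\bigcup_{t\in F}(-t+B)$. A point $x\in X$ is uniformly recurrent near zero iff for each neighbourhood $W$ of $x$, the set $\{s\in S: T_s(x)\in W\}$ is syndetic near zero. *)

From Stdlib Require Import Reals List.
Open Scope R_scope.

Definition dense_subsemigroup (S : R -> Prop) : Prop :=
  (forall s, S s -> 0 < s) /\
  (forall s t, S s -> S t -> S (s + t)) /\
  (forall a b, 0 < a -> a < b -> exists s, S s /\ a < s < b).

(* An ultrafilter on S is a family p of subsets of S (given as predicates on R
   contained in S). *)
Definition ultrafilter (S : R -> Prop) (p : (R -> Prop) -> Prop) : Prop :=
  (forall A, p A -> forall x, A x -> S x) /\
  p S /\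
  ~ p (fun _ => False) /\
  (forall A B, p A -> (forall x, A x -> B x) -> (forall x, B x -> S x) -> p B) /\
  (forall A B, p A -> p B -> p (fun x => A x /\ B x)) /\
  (forall A, (forall x, A x -> S x) -> p A \/ p (fun x => S x /\ ~ A x)).

Definition shiftl (S : R -> Prop) (x : R) (A : R -> Prop) : R -> Prop :=
  fun y => S y /\ A (x + y).

Definition bplus (S : R -> Prop) (p q : (R -> Prop) -> Prop) : (R -> Prop) -> Prop :=
  fun A => (forall z, A z -> S z) /\ p (fun x => S x /\ q (shiftl S x A)).

Definition Oplus (S : R -> Prop) (p : (R -> Prop) -> Prop) : Prop :=
  ultrafilter S p /\
  forall eps, 0 < eps -> p (fun s => S s /\ 0 < s /\ s < eps).

Definition idempotent (S : R -> Prop) (u : (R -> Prop) -> Prop) : Prop :=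
  bplus S u u = u.

Definition left_ideal_Oplus (S : R -> Prop) (L : ((R -> Prop) -> Prop) -> Prop) : Prop :=
  (exists q, L q) /\
  (forall q, L q -> Oplus S q) /\
  (forall p q, Oplus S p -> L q -> L (bplus S p q)).

Definition minimal_left_ideal_Oplus (S : R -> Prop)
    (L : ((R -> Prop) -> Prop) -> Prop) : Prop :=
  left_ideal_Oplus S L /\
  forall L', left_ideal_Oplus S L' -> (forall q, L' q -> L q) ->
             forall q, L q -> L' q.

Definition is_topology {X : Type} (open : (X -> Prop) -> Prop) : Prop :=
  open (fun _ => True) /\
  open (fun _ => False) /\
  (forall U V, open U -> open V -> open (fun x => U x /\ V x)) /\
  (forall C : (X -> Prop) -> Prop, (forall U, C U -> open U) ->
      open (fun x => exists U, C U /\ U x)).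

Definition hausdorff {X : Type} (open : (X -> Prop) -> Prop) : Prop :=
  forall x y, x <> y -> exists U V, open U /\ open V /\ U x /\ V y /\
    (forall z, U z -> V z -> False).

Definition compact {X : Type} (open : (X -> Prop) -> Prop) : Prop :=
  forall C : (X -> Prop) -> Prop, (forall U, C U -> open U) ->
    (forall x, exists U, C U /\ U x) ->
    exists l : list (X -> Prop), (forall U, In U l -> C U) /\
      (forall x, exists U, In U l /\ U x).

Definition continuous {X : Type} (open : (X -> Prop) -> Prop) (f : X -> X) : Prop :=
  forall U, open U -> open (fun x => U (f x)).

Definition neighbourhood {X : Type} (open : (X -> Prop) -> Prop) (W : X -> Prop) (x : X)
  : Prop := exists U, open U /\ U x /\ (forall z, U z -> W z).

Definition dynamical_system (S : R -> Prop) {X : Type} (open : (X -> Prop) -> Prop)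
    (T : R -> X -> X) : Prop :=
  is_topology open /\ hausdorff open /\ compact open /\
  (forall s, S s -> continuous open (T s)) /\
  (forall s t x, S s -> S t -> T s (T t x) = T (s + t) x).

Definition plim (S : R -> Prop) {X : Type} (open : (X -> Prop) -> Prop)
    (p : (R -> Prop) -> Prop) (f : R -> X) (y : X) : Prop :=
  forall W, neighbourhood open W y -> p (fun s => S s /\ W (f s)).

Definition Tp_eq (S : R -> Prop) {X : Type} (open : (X -> Prop) -> Prop)
    (T : R -> X -> X) (p : (R -> Prop) -> Prop) (x y : X) : Prop :=
  plim S open p (fun s => T s x) y.

Definition syndetic_near_zero (S : R -> Prop) (B : R -> Prop) : Prop :=
  forall eps, 0 < eps ->
    exists F : list R, F <> nil /\
      (forall t, In t F -> S t /\ 0 < t /\ t < eps) /\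
      exists delta, 0 < delta /\
        forall s, S s -> 0 < s -> s < delta ->
          exists t, In t F /\ shiftl S t B s.

Definition unif_recurrent_near_zero (S : R -> Prop) {X : Type}
    (open : (X -> Prop) -> Prop) (T : R -> X -> X) (x : X) : Prop :=
  forall W, neighbourhood open W x ->
    syndetic_near_zero S (fun s => S s /\ W (T s x)).

From Stdlib Require Import Reals List Classical FunctionalExtensionality PropExtensionality Lra.
From mathcomp Require boolp classical_sets.
Open Scope R_scope.

(* (a) -> (b): the return-time sets of x are syndetic near zero, so for a fixed v in L
   some q in O^+(S) puts all of them in q + v; then u = q + v lies in L and T_u x = x.
   (b) -> (a): for p in O^+(S), minimality of L gives u = q + (p + u), hence
   T_q (T_p x) = x; so p contains -t + B for arbitrarily small t whenever B is a
   return-time set, and a set with this property for every p in O^+(S) is syndetic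
   near zero.
   (b) -> (d): the elements of L fixing x form a compact subsemigroup of beta S, which
   contains an idempotent by the Ellis-Numakura lemma.
   (c) -> (d): T_u x = T_u (T_u y) = T_(u+u) y = x. *)

Lemma zorn_preorder (T : Type) (t0 : T) (le : T -> T -> Prop) :
  (forall t, le t t) -> (forall r s t, le r s -> le s t -> le r t) ->
  (forall C : T -> Prop, (forall s t, C s -> C t -> le s t \/ le t s) ->
     exists t, forall s, C s -> le s t) ->
  exists t, forall s, le t s -> le s t.
Proof.
intros Hrefl Htrans Hchain.
set (leb := fun a b => boolp.asbool (le a b)).
assert (Hleb : forall a b, leb a b = true <-> le a b).
{ intros a b. unfold leb. split; intro H.
  - exact (ssrbool.elimT (boolp.asboolP _) H).
  - exact (ssrbool.introT (boolp.asboolP _) H). }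
destruct (@classical_sets.ZL_preorder T t0 leb) as [t Hmax].
- intro t; apply Hleb; auto.
- intros r s u H1 H2; apply Hleb; apply Hleb in H1; apply Hleb in H2; eauto.
- intros C HC. destruct (Hchain C) as [t Ht].
  + intros s u Cs Cu. destruct (HC s u Cs Cu) as [H | H]; [left | right]; apply Hleb; exact H.
  + exists t. intros s Cs. apply Hleb. auto.
- exists t. intros s H. apply Hleb, Hmax, Hleb, H.
Qed.

Section Ultrafilters.
Variable S : R -> Prop.

Definition filter_on (F : (R -> Prop) -> Prop) : Prop :=
  (forall A, F A -> forall x, A x -> S x) /\
  F S /\
  ~ F (fun _ => False) /\
  (forall A B, F A -> (forall x, A x -> B x) -> (forall x, B x -> S x) -> F B) /\
  (forall A B, F A -> F B -> F (fun x => A x /\ B x)).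

Section OneUltrafilter.
Variable p : (R -> Prop) -> Prop.
Hypothesis Hp : ultrafilter S p.

Lemma ultrafilter_sub A x : p A -> A x -> S x.
Proof. destruct Hp as (HS & _). eauto. Qed.

Lemma ultrafilter_full : p S.
Proof. destruct Hp as (_ & HS & _). exact HS. Qed.

Lemma ultrafilter_up A B :
  p A -> (forall x, S x -> A x -> B x) -> (forall x, B x -> S x) -> p B.
Proof.
destruct Hp as (Hsub & _ & _ & Hup & _). intros HA HAB HB.
apply (Hup A B HA); auto. intros x Ax. apply HAB; eauto.
Qed.

Lemma ultrafilter_up_S A (P : R -> Prop) :
  p A -> (forall x, S x -> A x -> P x) -> p (fun x => S x /\ P x).
Proof. intros HA HAP. apply (ultrafilter_up _ _ HA); [| tauto]. intros x Sx Ax; auto. Qed.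

Lemma ultrafilter_inter A B : p A -> p B -> p (fun x => A x /\ B x).
Proof. destruct Hp as (_ & _ & _ & _ & Hinter & _). auto. Qed.

Lemma ultrafilter_nonempty A : p A -> exists x, A x.
Proof.
destruct Hp as (_ & _ & Hempty & Hup & _). intro HA. apply NNPP; intro Hno.
apply Hempty, (Hup A); auto; [intros x Ax; apply Hno; eauto | intros x []].
Qed.

Lemma ultrafilter_dichotomy A :
  p (fun x => S x /\ A x) \/ p (fun x => S x /\ ~ A x).
Proof.
destruct Hp as (_ & _ & _ & _ & _ & Hult).
destruct (Hult (fun x => S x /\ A x)) as [H | H]; [tauto | left; exact H |].
right. apply (ultrafilter_up _ _ H); tauto.
Qed.

Lemma ultrafilter_compl_of_not A :
  (forall x, A x -> S x) -> ~ p A -> p (fun x => S x /\ ~ A x).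
Proof.
intros HA HnA. destruct (ultrafilter_dichotomy A) as [H | H]; auto.
exfalso. apply HnA, (ultrafilter_up _ _ H); tauto.
Qed.

Lemma ultrafilter_not_compl A : p A -> ~ p (fun x => S x /\ ~ A x).
Proof.
intros H1 H2. destruct (ultrafilter_nonempty _ (ultrafilter_inter _ _ H1 H2)) as [x Hx].
tauto.
Qed.

Lemma ultrafilter_finite_cover {I : Type} (l : list I) (Bf : I -> R -> Prop) A :
  p A -> (forall x, A x -> exists t, In t l /\ Bf t x) -> (forall t x, Bf t x -> S x) ->
  exists t, In t l /\ p (Bf t).
Proof.
revert A. induction l as [| t l IH]; intros A HA Hcov HBS.
- destruct (ultrafilter_nonempty _ HA) as [x Ax]. destruct (Hcov x Ax) as [t [[] _]].
- destruct (ultrafilter_dichotomy (Bf t)) as [H | H].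
  + exists t. split; [left; reflexivity |]. apply (ultrafilter_up _ _ H); [tauto | eauto].
  + destruct (IH (fun x => A x /\ (S x /\ ~ Bf t x))) as [t' [Ht' Hpt']].
    * apply ultrafilter_inter; auto.
    * intros x [Ax [_ Hx]]. destruct (Hcov x Ax) as [t' [[<- | Ht'] Hxt']]; [contradiction | eauto].
    * exact HBS.
    * exists t'. split; [right |]; assumption.
Qed.

End OneUltrafilter.

Lemma ultrafilter_eq p q :
  ultrafilter S p -> ultrafilter S q -> (forall A, p A -> q A) -> p = q.
Proof.
intros Hp Hq Hpq. apply functional_extensionality; intro A.
apply propositional_extensionality. split; [apply Hpq |]. intro HqA.
apply NNPP; intro HnA.
apply (ultrafilter_not_compl q Hq A HqA), Hpq, ultrafilter_compl_of_not; auto.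
intros x; exact (ultrafilter_sub q Hq A x HqA).
Qed.

Lemma filter_union_of_chain (Ch : ((R -> Prop) -> Prop) -> Prop) :
  (exists F, Ch F) -> (forall F, Ch F -> filter_on F) ->
  (forall F G, Ch F -> Ch G -> (forall A, F A -> G A) \/ (forall A, G A -> F A)) ->
  filter_on (fun A => exists F, Ch F /\ F A).
Proof.
intros [F0 HF0] Hfil Htot.
repeat split.
- intros A [F [HF HA]]. destruct (Hfil F HF) as (Hsub & _). eauto.
- exists F0. split; auto. apply (Hfil F0 HF0).
- intros [F [HF HA]]. destruct (Hfil F HF) as (_ & _ & Hempty & _). auto.
- intros A B [F [HF HA]] HAB HB. exists F. split; auto.
  destruct (Hfil F HF) as (_ & _ & _ & Hup & _). eauto.
- intros A B [F [HF HA]] [G [HG HB]].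
  destruct (Htot F G HF HG) as [HFG | HGF].
  + exists G. split; auto. apply (Hfil G HG); auto.
  + exists F. split; auto. apply (Hfil F HF); auto.
Qed.

Lemma filter_adjoin F A :
  filter_on F -> (forall x, A x -> S x) -> ~ F (fun x => S x /\ ~ A x) ->
  filter_on (fun B => (forall x, B x -> S x) /\
                      exists C, F C /\ forall x, C x -> A x -> B x).
Proof.
intros (Hsub & HS & Hempty & Hup & Hinter) HA HnA.
split; [| split; [| split; [| split]]].
- intros B [HB _]. exact HB.
- split; [exact (fun x Hx => Hx) | exists S; split; auto].
- intros [_ [C [HC HCA]]]. apply HnA, (Hup C); auto; [| tauto].
  intros x Cx. split; [eauto | exact (HCA x Cx)].
- intros B B' [_ [C [HC HCB]]] HBB' HB'. split; auto. exists C. split; auto.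
- intros B B' [HB [C [HC HCB]]] [_ [C' [HC' HCB']]].
  split; [intros x [Bx _]; auto |].
  exists (fun x => C x /\ C' x). split; auto. intros x [Cx C'x] Ax. auto.
Qed.

Lemma filter_extends_to_ultrafilter F0 :
  filter_on F0 -> exists p, ultrafilter S p /\ forall A, F0 A -> p A.
Proof.
intro HF0.
set (Ty := {F : (R -> Prop) -> Prop | filter_on F /\ forall A, F0 A -> F A}).
set (le := fun F G : Ty => forall A, proj1_sig F A -> proj1_sig G A).
assert (HF0' : filter_on F0 /\ forall A, F0 A -> F0 A) by auto.
destruct (zorn_preorder Ty (exist _ F0 HF0') le) as [[M [HM HF0M]] Hmax].
- intros F A; auto.
- intros F G H HFG HGH A HA; auto.
- intros C Htot. destruct (classic (exists F, C F)) as [[F HF] | Hno].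
  2:{ exists (exist _ F0 HF0'). intros G HG. exfalso; eauto. }
  set (Ch := fun G => exists F : Ty, C F /\ G = proj1_sig F).
  assert (HU : filter_on (fun A => exists G, Ch G /\ G A)).
  { apply filter_union_of_chain.
    - exists (proj1_sig F), F. auto.
    - intros G [F' [_ ->]]. exact (proj1 (proj2_sig F')).
    - intros G G' [F1 [HF1 ->]] [F2 [HF2 ->]]. apply (Htot F1 F2 HF1 HF2). }
  assert (HU0 : forall A, F0 A -> exists G, Ch G /\ G A).
  { intros A HA. exists (proj1_sig F). split; [exists F; auto | exact (proj2 (proj2_sig F) A HA)]. }
  exists (exist _ (fun A => exists G, Ch G /\ G A) (conj HU HU0) : Ty).
  intros G HG A HA. exists (proj1_sig G). split; [exists G; auto | exact HA].
- exists M. split; auto.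
  destruct HM as (Hsub & HS & Hempty & Hup & Hinter).
  repeat split; auto. intros A HA. apply NNPP; intro Hneither.
  assert (HnA : ~ M (fun x => S x /\ ~ A x)) by tauto.
  assert (HG := filter_adjoin M A (conj Hsub (conj HS (conj Hempty (conj Hup Hinter)))) HA HnA).
  assert (HG0 : forall B, F0 B -> (forall x, B x -> S x) /\
                   exists C, M C /\ forall x, C x -> A x -> B x).
  { intros B HB. split; [eauto | exists B; split; auto]. }
  assert (HMG := Hmax (exist _ _ (conj HG HG0) : Ty)).
  apply Hneither. left. apply HMG.
  + intros B HB. split; [eauto | exists B; split; auto].
  + split; [exact HA | exists S; split; auto].
Qed.

Lemma ultrafilter_of_base (base : (R -> Prop) -> Prop) :
  (exists B, base B) ->
  (forall B, base B -> exists x, S x /\ B x) ->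
  (forall B1 B2, base B1 -> base B2 ->
     exists B3, base B3 /\ forall x, S x -> B3 x -> B1 x /\ B2 x) ->
  exists p, ultrafilter S p /\ forall B, base B -> p (fun x => S x /\ B x).
Proof.
intros [B0 HB0] Hne Hdir.
set (F := fun A => (forall x, A x -> S x) /\
                   exists B, base B /\ forall x, S x -> B x -> A x).
destruct (filter_extends_to_ultrafilter F) as [p [Hp HF]].
- split; [| split; [| split; [| split]]].
  + intros A [HA _]. exact HA.
  + split; [exact (fun x Hx => Hx) | exists B0; auto].
  + intros [_ [B [HB HBe]]]. destruct (Hne B HB) as [x [Sx Bx]]. exact (HBe x Sx Bx).
  + intros A A' [_ [B [HB HBA]]] HAA' HA'. split; auto. exists B. auto.
  + intros A A' [HA [B [HB HBA]]] [_ [B' [HB' HBA']]].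
    split; [intros x [Ax _]; auto |].
    destruct (Hdir B B' HB HB') as [B3 [HB3 H3]].
    exists B3. split; auto. intros x Sx B3x. destruct (H3 x Sx B3x). auto.
- exists p. split; auto. intros B HB. apply HF. split; [tauto |].
  exists B. auto.
Qed.

End Ultrafilters.

Section BetaS.
Variable S : R -> Prop.
Hypothesis HS : dense_subsemigroup S.

Lemma dense_subsemigroup_add s t : S s -> S t -> S (s + t).
Proof. destruct HS as (_ & Hadd & _). auto. Qed.

Lemma dense_subsemigroup_between a b : 0 < a -> a < b -> exists s, S s /\ a < s < b.
Proof. destruct HS as (_ & _ & Hdense). auto. Qed.

Lemma bplus_ultrafilter p q :
  ultrafilter S p -> ultrafilter S q -> ultrafilter S (bplus S p q).
Proof.
intros Hp Hq. unfold bplus.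
split; [| split; [| split; [| split; [| split]]]].
- intros A [HA _]. exact HA.
- split; [exact (fun x Hx => Hx) |].
  apply (ultrafilter_up_S S p Hp _ _ (ultrafilter_full S p Hp)). intros x Sx _.
  apply (ultrafilter_up_S S q Hq _ _ (ultrafilter_full S q Hq)). intros y Sy _.
  apply dense_subsemigroup_add; auto.
- intros [_ H]. destruct (ultrafilter_nonempty S p Hp _ H) as [x [_ Hx]].
  destruct (ultrafilter_nonempty S q Hq _ Hx) as [y [_ []]].
- intros A B [HA H] HAB HB. split; auto.
  apply (ultrafilter_up_S S p Hp _ _ H). intros x Sx [_ Hx].
  apply (ultrafilter_up_S S q Hq _ _ Hx). intros y Sy [_ Hxy]. auto.
- intros A B [HA H1] [HB H2]. split; [intros x [? ?]; auto |].
  apply (ultrafilter_up_S S p Hp _ _ (ultrafilter_inter S p Hp _ _ H1 H2)).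
  intros x Sx [[_ Hx1] [_ Hx2]].
  apply (ultrafilter_up_S S q Hq _ _ (ultrafilter_inter S q Hq _ _ Hx1 Hx2)).
  intros y Sy [[_ ?] [_ ?]]. split; auto.
- intros A HA.
  destruct (ultrafilter_dichotomy S p Hp (fun x => q (shiftl S x A))) as [H | H].
  + left. split; auto.
  + right. split; [tauto |]. apply (ultrafilter_up_S S p Hp _ _ H). intros x Sx [_ HnA].
    destruct (ultrafilter_dichotomy S q Hq (shiftl S x A)) as [H' | H'].
    * exfalso. apply HnA, (ultrafilter_up_S S q Hq _ _ H'). unfold shiftl; tauto.
    * apply (ultrafilter_up_S S q Hq _ _ H'). intros y Sy [_ HnxA].
      split; [apply dense_subsemigroup_add; auto |].
      intro Hxy. apply HnxA. split; auto.
Qed.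

Lemma bplus_assoc p q r :
  ultrafilter S p -> ultrafilter S q -> ultrafilter S r ->
  bplus S (bplus S p q) r = bplus S p (bplus S q r).
Proof.
intros Hp Hq Hr.
apply (ultrafilter_eq S); [repeat apply bplus_ultrafilter; auto .. |].
intros A [HA [_ H]]. split; auto.
apply (ultrafilter_up_S S p Hp _ _ H). intros y Sy [_ H1].
split; [unfold shiftl; tauto |].
apply (ultrafilter_up_S S q Hq _ _ H1). intros z Sz [_ [_ H2]].
apply (ultrafilter_up_S S r Hr _ _ H2). intros w Sw [_ H3].
split; [apply dense_subsemigroup_add; auto |].
rewrite <- Rplus_assoc. exact H3.
Qed.

Lemma Oplus_ultrafilter p : Oplus S p -> ultrafilter S p.
Proof. intros [Hp _]. exact Hp. Qed.

Lemma Oplus_bplus p q : Oplus S p -> Oplus S q -> Oplus S (bplus S p q).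
Proof.
intros [Hp Hp0] [Hq Hq0]. split; [apply bplus_ultrafilter; auto |].
intros eps He. split; [tauto |].
apply (ultrafilter_up_S S p Hp _ _ (Hp0 (eps / 2) ltac:(lra))). intros x Sx [_ Hx].
apply (ultrafilter_up_S S q Hq _ _ (Hq0 (eps / 2) ltac:(lra))). intros y Sy [_ Hy].
split; [apply dense_subsemigroup_add; auto | lra].
Qed.

Lemma Oplus_of_base (base : (R -> Prop) -> Prop) :
  (exists B, base B) ->
  (forall B eps, base B -> 0 < eps -> exists x, S x /\ 0 < x < eps /\ B x) ->
  (forall B1 B2, base B1 -> base B2 ->
     exists B3, base B3 /\ forall x, S x -> B3 x -> B1 x /\ B2 x) ->
  exists p, Oplus S p /\ forall B, base B -> p (fun x => S x /\ B x).
Proof.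
intros [B0 HB0] Hmeet Hdir.
destruct (ultrafilter_of_base S (fun C => exists eps B, 0 < eps /\ base B /\
                                   forall x, 0 < x < eps -> B x -> C x))
  as [p [Hp HpC]].
- exists B0, 1, B0. split; [lra | auto].
- intros C [eps [B [He [HB HBC]]]].
  destruct (Hmeet B eps HB He) as [x [Sx [Hx Bx]]]. eauto.
- intros C1 C2 [e1 [B1 [He1 [HB1 H1]]]] [e2 [B2 [He2 [HB2 H2]]]].
  destruct (Hdir B1 B2 HB1 HB2) as [B3 [HB3 H3]].
  exists (fun x => 0 < x < Rmin e1 e2 /\ B3 x). split.
  + exists (Rmin e1 e2), B3. split; [apply Rmin_pos; auto | auto].
  + intros x Sx [[Hx0 Hxe] B3x]. destruct (H3 x Sx B3x).
    assert (Rmin e1 e2 <= e1) by apply Rmin_l.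
    assert (Rmin e1 e2 <= e2) by apply Rmin_r.
    split; [apply H1 | apply H2]; auto; lra.
- exists p. split.
  + split; auto. intros eps He.
    assert (Hnear : p (fun x => S x /\ 0 < x < eps)).
    { apply HpC. exists eps, B0. split; [exact He | split; [exact HB0 | tauto]]. }
    exact Hnear.
  + intros B HB. apply HpC. exists 1, B. split; [lra | split; [exact HB | tauto]].
Qed.

End BetaS.

Section ClosedFamilies.
Variable S : R -> Prop.
Hypothesis HS : dense_subsemigroup S.

(* [K] is closed in the topology of [beta S]: it contains every ultrafilter
   each of whose members belongs to some element of [K]. *)
Definition closed_family (K : ((R -> Prop) -> Prop) -> Prop) : Prop :=
  forall p, ultrafilter S p -> (forall A, p A -> exists q, K q /\ q A) -> K p.

Lemma closed_family_of_large K r :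
  (forall q, K q -> ultrafilter S q) -> closed_family K -> ultrafilter S r ->
  (forall D, (forall q, K q -> q D) -> r (fun x => S x /\ D x)) -> K r.
Proof.
intros HKu HK Hr Hlarge. apply HK; auto. intros A HA. apply NNPP; intro Hno.
assert (Hlarge_nA : forall q, K q -> q (fun x => S x /\ ~ A x)).
{ intros q Kq.
apply (ultrafilter_compl_of_not S q (HKu q Kq)).
- intros x. exact (ultrafilter_sub S r Hr A x HA).
- intro qA. apply Hno. eauto. }
apply (ultrafilter_not_compl S r Hr A HA).
apply (ultrafilter_up_S S r Hr _ _ (Hlarge _ Hlarge_nA)). tauto.
Qed.

(* Compactness of [beta S]. *)
Lemma closed_chain_common_point (Ch : (((R -> Prop) -> Prop) -> Prop) -> Prop) :
  (exists K, Ch K) ->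
  (forall K, Ch K -> (forall q, K q -> ultrafilter S q) /\ (exists q, K q) /\ closed_family K) ->
  (forall K1 K2, Ch K1 -> Ch K2 -> (forall q, K1 q -> K2 q) \/ (forall q, K2 q -> K1 q)) ->
  exists p, forall K, Ch K -> K p.
Proof.
intros [K0 HK0] HCh Htot.
destruct (ultrafilter_of_base S (fun B => exists K, Ch K /\ forall q, K q -> q B))
  as [p [Hp HpB]].
- exists S, K0. split; auto. intros q Kq. apply ultrafilter_full, (HCh K0 HK0), Kq.
- intros B [K [HK HKB]]. destruct (HCh K HK) as [HKu [[q Kq] _]].
  destruct (ultrafilter_nonempty S q (HKu q Kq) B (HKB q Kq)) as [x Bx].
  exists x. split; [exact (ultrafilter_sub S q (HKu q Kq) B x (HKB q Kq) Bx) | exact Bx].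
- intros B1 B2 [K1 [HK1 H1]] [K2 [HK2 H2]].
  exists (fun x => B1 x /\ B2 x). split; [| tauto].
  destruct (Htot K1 K2 HK1 HK2) as [H12 | H21].
  + exists K1. split; [exact HK1 |]. intros q Kq.
    exact (ultrafilter_inter S q (proj1 (HCh K1 HK1) q Kq) _ _ (H1 q Kq) (H2 q (H12 q Kq))).
  + exists K2. split; [exact HK2 |]. intros q Kq.
    exact (ultrafilter_inter S q (proj1 (HCh K2 HK2) q Kq) _ _ (H1 q (H21 q Kq)) (H2 q Kq)).
- exists p. intros K HK. destruct (HCh K HK) as [HKu [_ HKc]].
  apply closed_family_of_large; auto. intros D HD. apply HpB. eauto.
Qed.

Lemma closed_family_inter K1 K2 :
  closed_family K1 -> closed_family K2 -> closed_family (fun q => K1 q /\ K2 q).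
Proof.
intros H1 H2 p Hp Hcl.
split; [apply H1 | apply H2]; auto; intros A HA;
  destruct (Hcl A HA) as [q [[? ?] ?]]; eauto.
Qed.

Lemma closed_family_Oplus : closed_family (Oplus S).
Proof.
intros p Hp Hcl. split; auto. intros eps He. apply NNPP; intro Hno.
destruct (Hcl _ (ultrafilter_compl_of_not S p Hp _ (fun x Hx => proj1 Hx) Hno))
  as [q [[Hq Hq0] HqnA]].
exact (ultrafilter_not_compl S q Hq _ (Hq0 eps He) HqnA).
Qed.

Lemma closed_family_left_fixers e :
  ultrafilter S e -> closed_family (fun q => ultrafilter S q /\ bplus S q e = e).
Proof.
intros He p Hp Hcl. split; auto. symmetry.
apply (ultrafilter_eq S e _ He (bplus_ultrafilter S HS p e Hp He)).
intros A HA. apply NNPP; intro HnA.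
assert (HAS : forall x, A x -> S x) by exact (fun x => ultrafilter_sub S e He A x HA).
destruct (ultrafilter_compl_of_not S _ (bplus_ultrafilter S HS p e Hp He) A HAS HnA)
  as [_ HpnA].
destruct (Hcl _ HpnA) as [q [[Hq Hqe] HqnA]].
assert (Hqe_nA : bplus S q e (fun x => S x /\ ~ A x)) by (split; [tauto | exact HqnA]).
rewrite Hqe in Hqe_nA. exact (ultrafilter_not_compl S e He A HA Hqe_nA).
Qed.

(* Right translation by [e] is continuous, so it maps the compact set [K] to a closed set. *)
Lemma closed_family_right_translate K e :
  (forall q, K q -> ultrafilter S q) -> closed_family K -> ultrafilter S e ->
  closed_family (fun p => exists r, K r /\ p = bplus S r e).
Proof.
intros HKu HK He p Hp Hcl.
destruct (ultrafilter_of_base S (fun C => exists A D, p A /\ (forall q, K q -> q D) /\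
                                  C = fun x => D x /\ e (shiftl S x A)))
  as [r [Hr HrC]].
- exists (fun x => S x /\ e (shiftl S x S)), S, S.
  split; [apply ultrafilter_full; auto | split; [| reflexivity]].
  intros q Kq. apply ultrafilter_full, HKu, Kq.
- intros C [A [D [HA [HD ->]]]].
  destruct (Hcl A HA) as [q [[r [Kr ->]] [_ HrA]]].
  destruct (ultrafilter_nonempty S r (HKu r Kr) _
              (ultrafilter_inter S r (HKu r Kr) _ _ HrA (HD r Kr))) as [x [[Sx ?] ?]].
  exists x. auto.
- intros C1 C2 [A1 [D1 [HA1 [HD1 ->]]]] [A2 [D2 [HA2 [HD2 ->]]]].
  exists (fun x => (D1 x /\ D2 x) /\ e (shiftl S x (fun y => A1 y /\ A2 y))). split.
  + exists (fun y => A1 y /\ A2 y), (fun x => D1 x /\ D2 x).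
    split; [apply (ultrafilter_inter S p Hp); auto | split; [| reflexivity]].
    intros q Kq. exact (ultrafilter_inter S q (HKu q Kq) _ _ (HD1 q Kq) (HD2 q Kq)).
  + intros x Sx [[D1x D2x] HeA]. split; split; auto;
      apply (ultrafilter_up_S S e He _ _ HeA); intros y _ [_ [? ?]]; auto.
- exists r. split.
  + apply closed_family_of_large; auto. intros D HD.
    apply (ultrafilter_up_S S r Hr _ _ (HrC _ (ex_intro _ S (ex_intro _ D
      (conj (ultrafilter_full S p Hp) (conj HD eq_refl)))))).
    intros x _ [_ [Dx _]]. exact Dx.
  + apply (ultrafilter_eq S); [exact Hp | apply (bplus_ultrafilter S HS); auto |].
    intros A HA. split; [exact (fun x => ultrafilter_sub S p Hp A x HA) |].
    apply (ultrafilter_up_S S r Hr _ _ (HrC _ (ex_intro _ A (ex_intro _ S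
      (conj HA (conj (fun q Kq => ultrafilter_full S q (HKu q Kq)) eq_refl)))))).
    intros x _ [_ [_ Hx]]. exact Hx.
Qed.

End ClosedFamilies.

Section EllisNumakura.
Variable S : R -> Prop.
Hypothesis HS : dense_subsemigroup S.

Definition compact_subsemigroup (K : ((R -> Prop) -> Prop) -> Prop) : Prop :=
  (forall q, K q -> ultrafilter S q) /\ (exists q, K q) /\ closed_family S K /\
  (forall v w, K v -> K w -> K (bplus S v w)).

Lemma minimal_compact_subsemigroup M :
  compact_subsemigroup M ->
  exists A, compact_subsemigroup A /\ (forall q, A q -> M q) /\
    forall B, compact_subsemigroup B -> (forall q, B q -> A q) -> forall q, A q -> B q.
Proof.
intro HM.
set (Ty := {K | compact_subsemigroup K /\ forall q, K q -> M q}).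
set (le := fun K1 K2 : Ty => forall q, proj1_sig K2 q -> proj1_sig K1 q).
assert (HMM : compact_subsemigroup M /\ forall q, M q -> M q) by auto.
destruct (zorn_preorder Ty (exist _ M HMM) le) as [[A [HA HAM]] Hmin].
- intros K q; auto.
- intros K1 K2 K3 H12 H23 q Hq; auto.
- intros Ch Htot. destruct (classic (exists K, Ch K)) as [[K0 HK0] | Hno].
  2:{ exists (exist _ M HMM). intros K HK. exfalso; eauto. }
  set (I := fun q => forall K : Ty, Ch K -> proj1_sig K q).
  assert (HI : compact_subsemigroup I /\ forall q, I q -> M q).
  { destruct (proj2_sig K0) as [[HK0u _] HK0M].
    split; [split; [| split; [| split]] | intros q Iq; exact (HK0M q (Iq K0 HK0))].
    - intros q Iq. exact (HK0u q (Iq K0 HK0)).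
    - destruct (closed_chain_common_point S
                  (fun K => exists k : Ty, Ch k /\ K = proj1_sig k)) as [p Hp].
      + exists (proj1_sig K0), K0. auto.
      + intros K [k [_ ->]]. destruct (proj2_sig k) as [[Hku [Hkne [Hkc _]]] _]. auto.
      + intros K1 K2 [k1 [Hk1 ->]] [k2 [Hk2 ->]].
        destruct (Htot k1 k2 Hk1 Hk2); [right | left]; auto.
      + exists p. intros K HK. apply Hp. eauto.
    - intros p Hp Hcl K HK. destruct (proj2_sig K) as [[_ [_ [HKc _]]] _].
      apply HKc; auto. intros A HA. destruct (Hcl A HA) as [q [Iq qA]]. eauto.
    - intros v w Iv Iw K HK. destruct (proj2_sig K) as [[_ [_ [_ HKs]]] _]. auto. }
  exists (exist _ I HI : Ty). intros K HK q Iq. exact (Iq K HK).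
- exists A. split; [exact HA | split; [exact HAM |]].
  intros B HB HBA. apply (Hmin (exist _ B (conj HB (fun q Bq => HAM q (HBA q Bq))) : Ty)).
  exact HBA.
Qed.

Lemma ellis_numakura M : compact_subsemigroup M -> exists e, M e /\ idempotent S e.
Proof.
intro HM.
destruct (minimal_compact_subsemigroup M HM) as [A [HA [HAM Hmin]]].
destruct HA as [HAu [[e Ae] [HAc HAs]]].
assert (He := HAu e Ae).
set (Ae' := fun p => exists r, A r /\ p = bplus S r e).
assert (HAe : compact_subsemigroup Ae').
{ split; [| split; [| split]].
  - intros q [r [Ar ->]]. apply (bplus_ultrafilter S HS); auto.
  - exists (bplus S e e), e. auto.
  - apply closed_family_right_translate; auto.
  - intros v w [r1 [Ar1 ->]] [r2 [Ar2 ->]].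
    exists (bplus S (bplus S r1 e) r2). split; [auto |].
    symmetry. apply (bplus_assoc S HS); [apply (bplus_ultrafilter S HS) | ..]; auto. }
assert (Hfix : exists r, A r /\ bplus S r e = e).
{ assert (HAeA : forall q, Ae' q -> A q) by (intros q [r [Ar ->]]; auto).
  destruct (Hmin Ae' HAe HAeA e Ae) as [r [Ar Er]].
  exists r. auto. }
set (Fix := fun q => A q /\ (ultrafilter S q /\ bplus S q e = e)).
assert (HFix : compact_subsemigroup Fix).
{ split; [| split; [| split]].
  - intros q [Aq _]. auto.
  - destruct Hfix as [r [Ar Er]]. exists r. split; auto.
  - apply closed_family_inter; [exact HAc | apply (closed_family_left_fixers S HS), He].
  - intros v w [Av [Hv Ev]] [Aw [Hw Ew]]. split; [auto | split].
    + apply (bplus_ultrafilter S HS); auto.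
    + rewrite (bplus_assoc S HS), Ew; auto. }
exists e. split; [auto |].
destruct (Hmin Fix HFix (fun q Fq => proj1 Fq) e Ae) as [_ [_ Ee]]. exact Ee.
Qed.

End EllisNumakura.

Section SyndeticNearZero.
Variable S : R -> Prop.
Hypothesis HS : dense_subsemigroup S.

Lemma syndetic_near_zero_of_Oplus B :
  (forall eps, 0 < eps -> forall p, Oplus S p ->
     exists t, S t /\ 0 < t < eps /\ p (shiftl S t B)) ->
  syndetic_near_zero S B.
Proof.
intros Hret eps He. apply NNPP; intro Hns.
destruct (dense_subsemigroup_between S HS (eps / 2) eps) as [t0 [St0 Ht0]]; try lra.
set (avoid := fun C => exists l, (forall t, In t l -> S t /\ 0 < t /\ t < eps) /\
                         forall s, S s -> (forall t, In t l -> ~ shiftl S t B s) -> C s).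
destruct (Oplus_of_base S avoid) as [p [Hp Hpavoid]].
- exists (fun _ => True), nil. split; [intros t [] | tauto].
- intros C delta [l [Hl HlC]] Hd. apply NNPP; intro Hno. apply Hns.
  exists (t0 :: l). split; [discriminate | split].
  + intros t [<- | Ht]; [split; [| split]; auto; lra | auto].
  + exists delta. split; [exact Hd |]. intros s Ss Hs0 Hsd. apply NNPP; intro Hnot.
    apply Hno. exists s. split; [exact Ss | split; [lra |]].
    apply HlC; [exact Ss |]. intros t Ht Hts. apply Hnot. exists t. split; [right |]; auto.
- intros C1 C2 [l1 [Hl1 H1]] [l2 [Hl2 H2]].
  exists (fun s => forall t, In t (l1 ++ l2) -> ~ shiftl S t B s). split.
  + exists (l1 ++ l2). split; [| auto].
    intros t Ht. apply in_app_iff in Ht. destruct Ht; auto.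
  + intros s Ss Hs. split; [apply H1 | apply H2]; auto;
      intros t Ht; apply Hs, in_app_iff; auto.
- destruct (Hret eps He p Hp) as [t [St [Ht HpB]]].
  assert (HpnB : p (fun s => S s /\ forall t', In t' (t :: nil) -> ~ shiftl S t' B s)).
  { apply Hpavoid. exists (t :: nil). split; [| auto].
    intros t' [<- | []]. split; [exact St | lra]. }
  destruct (ultrafilter_nonempty S p (Oplus_ultrafilter S p Hp) _
              (ultrafilter_inter S p (Oplus_ultrafilter S p Hp) _ _ HpB HpnB))
    as [s [HBs [_ Hns_s]]].
  exact (Hns_s t (or_introl eq_refl) HBs).
Qed.

Lemma Oplus_bplus_of_syndetic (Bs : (R -> Prop) -> Prop) v :
  Oplus S v -> (exists B, Bs B) ->
  (forall B1 B2, Bs B1 -> Bs B2 -> exists B3, Bs B3 /\ forall s, B3 s -> B1 s /\ B2 s) ->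
  (forall B, Bs B -> (forall s, B s -> S s) /\ syndetic_near_zero S B) ->
  exists q, Oplus S q /\ forall B, Bs B -> bplus S q v B.
Proof.
intros [Hv Hv0] [B0 HB0] Hdir Hsynd.
destruct (Oplus_of_base S (fun C => exists B, Bs B /\
                                forall t, S t -> v (shiftl S t B) -> C t))
  as [q [Hq HqC]].
- exists (fun t => v (shiftl S t B0)), B0. auto.
- intros C eps [B [HB HBC]] He.
  destruct (Hsynd B HB) as [_ HBsynd].
  destruct (HBsynd eps He) as [F [_ [HF [delta [Hd Hcov]]]]].
  destruct (ultrafilter_finite_cover S v Hv F (fun t => shiftl S t B) _ (Hv0 delta Hd))
    as [t [HtF Hvt]].
  + intros s [Ss [Hs0 Hsd]]. apply Hcov; auto.
  + intros t s [Ss _]. exact Ss.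
  + destruct (HF t HtF) as [St Ht]. exists t. split; [exact St | split; [exact Ht |]].
    apply HBC; auto.
- intros C1 C2 [B1 [HB1 H1]] [B2 [HB2 H2]].
  destruct (Hdir B1 B2 HB1 HB2) as [B3 [HB3 H3]].
  exists (fun t => v (shiftl S t B3)). split; [exists B3; auto |].
  intros t St Hvt. split; [apply H1 | apply H2]; auto;
    apply (ultrafilter_up_S S v Hv _ _ Hvt); intros s _ [_ HB3s];
    destruct (H3 _ HB3s); auto.
- exists q. split; [exact Hq |]. intros B HB. split; [apply (Hsynd B HB) |].
  apply HqC. exists B. auto.
Qed.

End SyndeticNearZero.

Section Limits.
Variable S : R -> Prop.
Hypothesis HS : dense_subsemigroup S.
Variables (X : Type) (open : (X -> Prop) -> Prop) (T : R -> X -> X).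
Hypothesis HD : dynamical_system S open T.

Lemma dynamical_system_open_full : open (fun _ => True).
Proof. destruct HD as ((Hfull & _) & _). exact Hfull. Qed.

Lemma dynamical_system_open_inter U V : open U -> open V -> open (fun y => U y /\ V y).
Proof. destruct HD as ((_ & _ & Hinter & _) & _). auto. Qed.

Lemma dynamical_system_continuous s : S s -> continuous open (T s).
Proof. destruct HD as (_ & _ & _ & Hcont & _). auto. Qed.

Lemma dynamical_system_act s t y : S s -> S t -> T s (T t y) = T (s + t) y.
Proof. destruct HD as (_ & _ & _ & _ & Hact). auto. Qed.

Lemma neighbourhood_of_open U y : open U -> U y -> neighbourhood open U y.
Proof. intros HU Uy. exists U. auto. Qed.

Lemma neighbourhood_full y : neighbourhood open (fun _ => True) y.
Proof. exists (fun _ => True). split; [exact dynamical_system_open_full | tauto]. Qed.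

Lemma neighbourhood_inter W1 W2 y :
  neighbourhood open W1 y -> neighbourhood open W2 y ->
  neighbourhood open (fun z => W1 z /\ W2 z) y.
Proof.
intros [U1 [HU1 [U1y HUW1]]] [U2 [HU2 [U2y HUW2]]].
exists (fun z => U1 z /\ U2 z).
split; [apply dynamical_system_open_inter; auto | split; [auto | intros z [? ?]; auto]].
Qed.

Lemma plim_exists p f : ultrafilter S p -> exists y, plim S open p f y.
Proof.
intro Hp. apply NNPP; intro Hno.
set (C := fun U => open U /\ ~ p (fun s => S s /\ U (f s))).
destruct HD as (_ & _ & Hcompact & _).
destruct (Hcompact C) as [l [Hl Hcov]].
- intros U [HU _]. exact HU.
- intro y. apply NNPP; intro Hy. apply Hno. exists y. intros W [U [HU [Uy UW]]].
  apply NNPP; intro HnW. apply Hy. exists U. split; [split; [exact HU |] | exact Uy].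
  intro HpU. apply HnW, (ultrafilter_up_S S p Hp _ _ HpU). intros s _ [_ Us]. auto.
- assert (Hmiss : p (fun s => S s /\ forall U, In U l -> ~ U (f s))).
  { clear Hcov. induction l as [| U l IH].
    + apply (ultrafilter_up_S S p Hp _ _ (ultrafilter_full S p Hp)).
      intros s _ _ U [].
    + destruct (Hl U (or_introl eq_refl)) as [_ HnU].
      assert (HpnU := ultrafilter_compl_of_not S p Hp _ (fun s Hs => proj1 Hs) HnU).
      assert (IH' := IH (fun V HV => Hl V (or_intror HV))).
      apply (ultrafilter_up_S S p Hp _ _ (ultrafilter_inter S p Hp _ _ HpnU IH')).
      intros s Ss [[_ HnUs] [_ Hl']] V [<- | HV]; [tauto | auto]. }
  destruct (ultrafilter_nonempty S p Hp _ Hmiss) as [s [_ Hs]].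
  destruct (Hcov (f s)) as [U [HUl Us]]. exact (Hs U HUl Us).
Qed.

Lemma plim_unique p f y1 y2 :
  ultrafilter S p -> plim S open p f y1 -> plim S open p f y2 -> y1 = y2.
Proof.
intros Hp H1 H2. apply NNPP; intro Hne.
destruct HD as (_ & Hhaus & _).
destruct (Hhaus y1 y2 Hne) as [U [V [HU [HV [Uy [Vy Hdisj]]]]]].
assert (HpU := H1 U (neighbourhood_of_open U y1 HU Uy)).
assert (HpV := H2 V (neighbourhood_of_open V y2 HV Vy)).
destruct (ultrafilter_nonempty S p Hp _ (ultrafilter_inter S p Hp _ _ HpU HpV))
  as [s [[_ ?] [_ ?]]].
eauto.
Qed.

Lemma Tp_eq_bplus p q y z w :
  ultrafilter S p -> ultrafilter S q ->
  Tp_eq S open T q y z -> Tp_eq S open T p z w -> Tp_eq S open T (bplus S p q) y w.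
Proof.
intros Hp Hq Hqz Hpw W [U [HU [Uw UW]]].
split; [tauto |].
apply (ultrafilter_up_S S p Hp _ _ (Hpw U (neighbourhood_of_open U w HU Uw))).
intros s Ss [_ Us].
assert (HTsU := dynamical_system_continuous s Ss U HU).
apply (ultrafilter_up_S S q Hq _ _ (Hqz _ (neighbourhood_of_open _ z HTsU Us))).
intros t St [_ Ut]. split; [apply (dense_subsemigroup_add S HS); auto |].
apply UW. rewrite <- dynamical_system_act; auto.
Qed.

End Limits.

Section MinimalLeftIdeal.
Variable S : R -> Prop.
Hypothesis HS : dense_subsemigroup S.
Variable L : ((R -> Prop) -> Prop) -> Prop.
Hypothesis HL : minimal_left_ideal_Oplus S L.

Lemma min_left_ideal_nonempty : exists q, L q.
Proof. destruct HL as ((Hne & _) & _). exact Hne. Qed.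

Lemma min_left_ideal_Oplus q : L q -> Oplus S q.
Proof. destruct HL as ((_ & HLO & _) & _). auto. Qed.

Lemma min_left_ideal_ultrafilter q : L q -> ultrafilter S q.
Proof. intro Lq. apply Oplus_ultrafilter, min_left_ideal_Oplus, Lq. Qed.

Lemma min_left_ideal_absorb p q : Oplus S p -> L q -> L (bplus S p q).
Proof. destruct HL as ((_ & _ & Habs) & _). auto. Qed.

Lemma min_left_ideal_translate v u : L v -> L u -> exists q, Oplus S q /\ u = bplus S q v.
Proof.
intros Lv. destruct HL as [_ Hmin].
apply (Hmin (fun w => exists r, Oplus S r /\ w = bplus S r v)).
- split; [| split].
  + exists (bplus S v v), v. split; [apply min_left_ideal_Oplus |]; auto.
  + intros q [r [Hr ->]]. apply (Oplus_bplus S HS); [| apply min_left_ideal_Oplus]; auto.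
  + intros p q Hp [r [Hr ->]]. exists (bplus S p r). split; [apply (Oplus_bplus S HS); auto |].
    symmetry. apply (bplus_assoc S HS); [apply Oplus_ultrafilter .. | apply min_left_ideal_ultrafilter]; auto.
- intros q [r [Hr ->]]. apply min_left_ideal_absorb; auto.
Qed.

Lemma closed_family_min_left_ideal : closed_family S L.
Proof.
destruct min_left_ideal_nonempty as [v Lv].
assert (Htr := closed_family_right_translate S HS (Oplus S) v (Oplus_ultrafilter S)
                 (closed_family_Oplus S) (min_left_ideal_ultrafilter v Lv)).
intros p Hp Hcl.
destruct (Htr p Hp) as [r [Hr ->]].
- intros A HA. destruct (Hcl A HA) as [q [Lq qA]].
  exists q. split; [apply min_left_ideal_translate |]; auto.
- apply min_left_ideal_absorb; auto.
Qed.

End MinimalLeftIdeal.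

Section UniformRecurrence.
Variable S : R -> Prop.
Hypothesis HS : dense_subsemigroup S.
Variables (X : Type) (open : (X -> Prop) -> Prop) (T : R -> X -> X).
Hypothesis HD : dynamical_system S open T.
Variable L : ((R -> Prop) -> Prop) -> Prop.
Hypothesis HL : minimal_left_ideal_Oplus S L.

Lemma closed_family_Tp_fixers x :
  closed_family S (fun v => ultrafilter S v /\ Tp_eq S open T v x x).
Proof.
intros p Hp Hcl. split; [exact Hp |]. intros W [U [HU [Ux UW]]]. apply NNPP; intro Hno.
assert (HnU : ~ p (fun s => S s /\ U (T s x))).
{ intro HpU. apply Hno, (ultrafilter_up_S S p Hp _ _ HpU). intros s _ [_ ?]. auto. }
destruct (Hcl _ (ultrafilter_compl_of_not S p Hp _ (fun s Hs => proj1 Hs) HnU))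
  as [q [[Hq HqT] HqnU]].
assert (HqU := HqT U (neighbourhood_of_open X open U x HU Ux)).
destruct (ultrafilter_nonempty S q Hq _ (ultrafilter_inter S q Hq _ _ HqU HqnU))
  as [s [[Ss Us] [_ HnUs]]].
tauto.
Qed.

Lemma Tp_fixed_of_unif_recurrent x :
  unif_recurrent_near_zero S open T x -> exists u, L u /\ Tp_eq S open T u x x.
Proof.
intro Hrec. destruct (min_left_ideal_nonempty S L HL) as [v Lv].
destruct (Oplus_bplus_of_syndetic S
            (fun B => exists W, neighbourhood open W x /\ B = fun s => S s /\ W (T s x)) v)
  as [q [Hq HqB]].
- apply (min_left_ideal_Oplus S L HL), Lv.
- exists (fun s => S s /\ True), (fun _ => True).
  split; [apply (neighbourhood_full S X open T HD) | reflexivity].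
- intros B1 B2 [W1 [HW1 ->]] [W2 [HW2 ->]].
  exists (fun s => S s /\ (W1 (T s x) /\ W2 (T s x))). split; [| tauto].
  exists (fun y => W1 y /\ W2 y). split; [apply (neighbourhood_inter S X open T HD) |]; auto.
- intros B [W [HW ->]]. split; [tauto | apply Hrec, HW].
- exists (bplus S q v). split; [apply (min_left_ideal_absorb S L HL); auto |].
  intros W HW. apply HqB. eauto.
Qed.

Lemma Tp_fixed_return x u :
  L u -> Tp_eq S open T u x x ->
  forall U, open U -> U x -> forall eps, 0 < eps -> forall p, Oplus S p ->
  exists t, S t /\ 0 < t < eps /\ p (shiftl S t (fun s => S s /\ U (T s x))).
Proof.
intros Lu Hux U HU Ux eps He p Hp.
assert (Hpu : ultrafilter S p) by (apply Oplus_ultrafilter, Hp).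
assert (Hu : ultrafilter S u) by (apply (min_left_ideal_ultrafilter S L HL), Lu).
assert (Lpu : L (bplus S p u)) by (apply (min_left_ideal_absorb S L HL); auto).
destruct (min_left_ideal_translate S HS L HL _ _ Lpu Lu) as [q [Hq Eu]].
assert (Hqu : ultrafilter S q) by (apply Oplus_ultrafilter, Hq).
destruct (plim_exists S X open T HD p (fun s => T s x) Hpu) as [z Hz].
destruct (plim_exists S X open T HD q (fun s => T s z) Hqu) as [z' Hz'].
assert (Hxz' : Tp_eq S open T u x z').
{ rewrite Eu. apply (Tp_eq_bplus S HS X open T HD q _ x z z');
    [| apply (bplus_ultrafilter S HS) | apply (Tp_eq_bplus S HS X open T HD p u x x z) | ]; auto. }
rewrite <- (plim_unique S X open T HD u _ _ _ Hu Hux Hxz') in Hz'.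
destruct Hq as [_ Hq0].
destruct (ultrafilter_nonempty S q Hqu _ (ultrafilter_inter S q Hqu _ _
            (Hz' U (neighbourhood_of_open X open U x HU Ux)) (Hq0 eps He)))
  as [t [[St Ut] [_ Ht]]].
exists t. split; [exact St | split; [exact Ht |]].
assert (HTtU := dynamical_system_continuous S X open T HD t St U HU).
apply (ultrafilter_up_S S p Hpu _ _ (Hz _ (neighbourhood_of_open X open _ z HTtU Ut))).
intros s Ss [_ HUs]. split; [apply (dense_subsemigroup_add S HS); auto |].
rewrite <- (dynamical_system_act S X open T HD); auto.
Qed.

Lemma unif_recurrent_of_Tp_fixed x u :
  L u -> Tp_eq S open T u x x -> unif_recurrent_near_zero S open T x.
Proof.
intros Lu Hux W [U [HU [Ux UW]]].
apply (syndetic_near_zero_of_Oplus S HS). intros eps He p Hp.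
destruct (Tp_fixed_return x u Lu Hux U HU Ux eps He p Hp) as [t [St [Ht HpU]]].
exists t. split; [exact St | split; [exact Ht |]].
apply (ultrafilter_up_S S p (Oplus_ultrafilter S p Hp) _ _ HpU).
intros s _ [_ [Sts Us]]. split; auto.
Qed.

Lemma idempotent_Tp_fixed_of_Tp_fixed x u :
  L u -> Tp_eq S open T u x x -> exists e, L e /\ idempotent S e /\ Tp_eq S open T e x x.
Proof.
intros Lu Hux.
destruct (ellis_numakura S HS (fun v => L v /\ (ultrafilter S v /\ Tp_eq S open T v x x)))
  as [e [[Le [_ Hex]] Ee]].
- split; [| split; [| split]].
  + intros q [_ [Hq _]]. exact Hq.
  + exists u. split; [| split]; auto. apply (min_left_ideal_ultrafilter S L HL), Lu.
  + apply closed_family_inter;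
      [apply (closed_family_min_left_ideal S HS L HL) | apply closed_family_Tp_fixers].
  + intros v w [Lv [Hv Hvx]] [Lw [Hw Hwx]].
    split; [apply (min_left_ideal_absorb S L HL); [apply (min_left_ideal_Oplus S L HL) |]; auto |].
    split; [apply (bplus_ultrafilter S HS); auto |].
    apply (Tp_eq_bplus S HS X open T HD v w x x x); auto.
- exists e. auto.
Qed.

Lemma Tp_fixed_of_idempotent_image x y u :
  L u -> idempotent S u -> Tp_eq S open T u y x -> Tp_eq S open T u x x.
Proof.
intros Lu Iu Hyx.
assert (Hu : ultrafilter S u) by (apply (min_left_ideal_ultrafilter S L HL), Lu).
destruct (plim_exists S X open T HD u (fun s => T s x) Hu) as [w Hxw].
assert (Hyw := Tp_eq_bplus S HS X open T HD u u y x w Hu Hu Hyx Hxw).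
unfold idempotent in Iu. rewrite Iu in Hyw.
rewrite <- (plim_unique S X open T HD u _ _ _ Hu Hyx Hyw) in Hxw. exact Hxw.
Qed.

End UniformRecurrence.

Theorem lemma2p7 (S : R -> Prop) (X : Type) (open : (X -> Prop) -> Prop)
  (T : R -> X -> X) (L : ((R -> Prop) -> Prop) -> Prop) (x : X) :
  dense_subsemigroup S ->
  dynamical_system S open T ->
  minimal_left_ideal_Oplus S L ->
  let a := unif_recurrent_near_zero S open T x in
  let b := exists u, L u /\ Tp_eq S open T u x x in
  let c := exists (y : X) u, L u /\ idempotent S u /\ Tp_eq S open T u y x in
  let d := exists u, L u /\ idempotent S u /\ Tp_eq S open T u x x in
  (a <-> b) /\ (b <-> c) /\ (c <-> d).
Proof.
intros HS HD HL a b c d.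
assert (Hab : a -> b) by exact (Tp_fixed_of_unif_recurrent S X open T HD L HL x).
assert (Hba : b -> a).
{ intros [u [Lu Hux]]. exact (unif_recurrent_of_Tp_fixed S HS X open T HD L HL x u Lu Hux). }
assert (Hbd : b -> d).
{ intros [u [Lu Hux]]. exact (idempotent_Tp_fixed_of_Tp_fixed S HS X open T HD L HL x u Lu Hux). }
assert (Hcd : c -> d).
{ intros [y [u [Lu [Iu Hyx]]]]. exists u.
  split; [| split]; auto. exact (Tp_fixed_of_idempotent_image S HS X open T HD L HL x y u Lu Iu Hyx). }
assert (Hdb : d -> b) by (intros [u [Lu [_ Hux]]]; exists u; auto).
assert (Hdc : d -> c) by (intros [u Hu]; exists x, u; exact Hu).
tauto.
Qed.
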